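(* Let $X$ be a compact topological space, let $D\subseteq X$, let $\overline{D}$ be the closure of $D$ in $X$, and put $\partial D:=\overline{D}\setminus D$. Let $\overline{\mathbb{C}}=\mathbb{C}\cup\{\infty\}$ be the Riemann sphere and let $f\colon\overline{D}\to\overline{\mathbb{C}}$ be a continuous map such that $f(D)$ is open in $\overline{\mathbb{C}}$. Suppose $f$ is finite on $\overline{D}$, i.e. $f(\overline{D})\subseteq\mathbb{C}$. Let $E_\infty$ denote the connected component of $\infty$ in $\overline{\mathbb{C}}\setminus f(\partial D)$. Then $f(\overline{D})\subseteq\overline{\mathbb{C}}\setminus E_\infty$.
   Context: Note that $\partial D$ is defined as $\overline{D}\setminus D$. *)

From HB Require Import structures.
From mathcomp Require Import all_boot all_order all_algebra.
From mathcomp Require Import all_classical all_reals all_analysis.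
Import numFieldNormedType.Exports.

(* The complex plane, as a topological space, is R x R (product topology);
   the Riemann sphere is its one-point compactification, with
   infinity = None and z in C embedded as Some z. *)
Notation riemann_sphere R :=
  (one_point_compactification (R * R)%type) (only parsing).
Notation infty := (@None _) (only parsing).

From HB Require Import structures.
From mathcomp Require Import all_boot all_order all_algebra.
From mathcomp Require Import all_classical all_reals all_analysis.
Import numFieldNormedType.Exports.
Local Open Scope classical_set_scope.

(* The component E of infinity is connected and contains infinity, which lies
   outside the compact, hence closed, set K := f(closure D).  Since E misses
   f(closure D \ D), the trace of K on E is the trace of the open set f(D);
   so E \ K is both open and closed in E, nonempty, hence all of E. *)

Lemma connected_subsetC_closed (T : topologicalType) (C K U : set T) :
    connected C -> closed K -> open U -> C `&` K `<=` U -> U `<=` K ->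
    (C `\` K) !=set0 -> C `<=` ~` K.
Proof.
move=> Ccon Kcl Uop CKU UK CK0 x Cx.
have CKE : C `\` K = C.
  apply: Ccon => //; first by exists (~` K) => //; exact: closed_openC.
  exists (~` U); first exact: open_closedC.
  apply/seteqP; split=> z [Cz zK]; split=> //.
    by move/UK.
  by move=> Kz; apply: zK; exact: CKU.
by rewrite -CKE in Cx; case: Cx.
Qed.

Lemma locally_compact_RR (R : realType) : locally_compact [set: (R * R)%type].
Proof.
move=> [a b] _; rewrite withinET.
exists (closed_ball a 1 `*` closed_ball b 1).
  exists (closed_ball a 1, closed_ball b 1) => //=; split;
  by apply/nbhs_closedballP; exists 1%:pos%R.
have cB : compact (closed_ball a 1 `*` closed_ball b 1).
  by apply: compact_setX; exact: closed_ballR_compact.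
by split=> //; apply: compact_closed => //; exact: norm_hausdorff.
Qed.

Lemma riemann_sphere_hausdorff (R : realType) :
  hausdorff_space (riemann_sphere R).
Proof.
apply: one_point_compactification_hausdorff; first exact: locally_compact_RR.
exact: norm_hausdorff.
Qed.

Theorem mainTheorem4 (R : realType) (X : topologicalType) (D : set X)
    (f : X -> riemann_sphere R) :
  compact [set: X] ->
  {within closure D, continuous f} ->
  open (f @` D) ->
  (forall x, closure D x -> f x <> infty) ->
  f @` closure D `<=`
    ~` connected_component (~` (f @` (closure D `\` D))) infty.
Proof.
move=> cX fc oD fin.
set E := connected_component _ _.
have Kcl : closed (f @` closure D).
  apply: compact_closed; first exact: riemann_sphere_hausdorff.
  apply: continuous_compact => //.
  by apply: (subclosed_compact _ cX) => //; exact: closed_closure.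
have EB : E `<=` ~` (f @` (closure D `\` D)) by exact: connected_component_sub.
have EKD : E `&` (f @` closure D) `<=` f @` D.
  move=> z [Ez [w cw wz]]; rewrite -wz in Ez *.
  have [Dw|nDw] := pselect (D w); first by exists w.
  by case: (EB _ Ez); exists w.
have Einf : (E `\` (f @` closure D)) infty.
  split; first by apply: connected_component_refl => -[w [/fin]].
  by case=> w /fin.
have EK : E `<=` ~` (f @` closure D).
  apply: connected_subsetC_closed Kcl oD EKD _ _; last by exists infty.
    exact: component_connected.
  by apply: image_subset; exact: subset_closure.
by move=> z Kz Ez; exact: EK Ez Kz.
Qed.
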